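(* Let $\overline{g}$ be the standard metric on the unit sphere $S^n \subset \mathbb{R}^{n+1}$ and let $f = x_{n+1}|_{S^n}$. If $\delta > 0$ is sufficiently small, then the function $e^{-\frac{1}{f-\delta}}$ satisfies $\Delta_{\overline{g}}\big(e^{-\frac{1}{f-\delta}}\big) \geq 0$ in the region $\{\delta < f < 3\delta\}$. *)

From HB Require Import structures.
From mathcomp Require Import all_boot all_order all_algebra.
From mathcomp Require Import all_classical all_reals all_analysis.
Set Implicit Arguments. Unset Strict Implicit. Unset Printing Implicit Defensive.
Import Order.TTheory GRing.Theory Num.Theory.
Import numFieldNormedType.Exports.
Local Open Scope ring_scope.

Definition sqnorm (R : realType) (n : nat) (x : 'rV[R]_n) : R :=
  \sum_(i < n) x 0 i ^+ 2.

Definition eucl_lap (R : realType) (n : nat) (F : 'rV[R]_n -> R) (x : 'rV[R]_n) : R :=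
  \sum_(i < n) derive (fun y => derive F y (delta_mx 0 i)) x (delta_mx 0 i).

(* Laplace-Beltrami operator of the round metric on the unit sphere S^n in R^(n+1):
   for u : R^(n+1) -> R (only its values on S^n matter), Delta_{S^n} u at x in S^n
   is the Euclidean Laplacian at x of the degree-0 homogeneous extension
   y |-> u (y / |y|). *)
Definition sphere_lap (R : realType) (n : nat) (u : 'rV[R]_n.+1 -> R) (x : 'rV[R]_n.+1) : R :=
  eucl_lap (fun y => u ((Num.sqrt (sqnorm y))^-1 *: y)) x.

Definition xlast (R : realType) (n : nat) (x : 'rV[R]_n.+1) : R := x 0 ord_max.

From HB Require Import structures.
From mathcomp Require Import all_boot all_order all_algebra.
From mathcomp Require Import all_classical all_reals all_analysis.
From mathcomp Require Import ring lra.
Import Order.TTheory GRing.Theory Num.Theory.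
Import numFieldNormedType.Exports.
Local Open Scope ring_scope.

(* Write f = x_(n+1) and phi(y) = exp(-1/(y - delta)).  On the unit sphere
     Delta (phi o f) = phi''(f) |grad f|^2 + phi'(f) Delta f
                     = phi''(f) (1 - f^2) - n f phi'(f),
   which for s = f - delta equals exp(-1/s) / s^4 * ((1 - 2 s) (1 - f^2) - n f s^2);
   when delta < f < 3 delta and delta is small the bracket is close to 1.
   The Laplacian formula is obtained one coordinate direction at a time: along
   the line x + t e_i through a point x of the sphere, f of the normalised point
   is (t [i = n+1] + f x) / sqrt (t^2 + 2 x_i t + 1), a function of one variable. *)

Section derive_along_line.
Variables (R : realType) (V W : normedModType R).

Lemma derive_along_line (F : V -> W) (x v : V) (s : R) :
  derive F (s *: v + x) v = derive (fun t : R => F (t *: v + x)) s 1.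
Proof.
rewrite /derive; apply: (congr1 (fun g : R -> W => lim (g @ 0^')%classic)).
by apply/funext => h /=; rewrite scalerDl addrA [h%:A]mulr1.
Qed.

Lemma derive2_along_line (F : V -> W) (x v : V) :
  derive (fun y => derive F y v) x v =
  derive (fun s : R => derive (fun t : R => F (t *: v + x)) s 1) 0 1.
Proof.
have -> : (fun s : R => derive (fun t : R => F (t *: v + x)) s 1) =
          (fun s : R => derive F (s *: v + x) v).
  by apply/funext => s; rewrite derive_along_line.
by rewrite -(derive_along_line (fun y => derive F y v)) scale0r add0r.
Qed.

End derive_along_line.

Section second_derivative.
Variable R : realType.
Implicit Types f g : R -> R.

Lemma is_derive1_near_comp {g} {x b : R} {P : R -> Prop} :
  is_derive x 1 g b -> (\forall y \near g x, P y) -> \forall t \near x, P (g t).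
Proof.
case=> dg _; have gx : {for x, continuous g}.
  by apply: differentiable_continuous; exact/derivable1_diffP.
exact: gx.
Qed.

Lemma derive2_near f f1 (x d : R) :
  (\forall t \near x, is_derive (t : R) 1 f (f1 t)) -> is_derive x 1 f1 d ->
  derive (fun s => derive f s 1) x 1 = d.
Proof.
move=> Df Df1; rewrite (@near_eq_derive _ _ _ _ f1); first exact: derive_val.
by apply: filterS Df => t Dft; exact: derive_val.
Qed.

Lemma derive2_comp f f1 g g1 (x f2 g2 : R) :
  (\forall t \near x, is_derive (t : R) 1 g (g1 t)) -> is_derive x 1 g1 g2 ->
  (\forall y \near g x, is_derive (y : R) 1 f (f1 y)) -> is_derive (g x) 1 f1 f2 ->
  derive (fun s => derive (fun t => f (g t)) s 1) x 1
    = f2 * g1 x ^+ 2 + f1 (g x) * g2.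
Proof.
move=> Dg Dg1 Df Df1.
have Dgx : is_derive x 1 g (g1 x) := nbhs_singleton Dg.
have Df_g : \forall t \near x, is_derive (g t) 1 f (f1 (g t)) :=
  is_derive1_near_comp Dgx Df.
apply: (@derive2_near _ (fun t => f1 (g t) * g1 t)).
  by near=> t; apply: is_derive1_comp; [exact: (near Df_g t) | exact: (near Dg t)].
apply: is_derive_eq (is_deriveM (is_derive1_comp Df1 Dgx) Dg1) _.
by rewrite /GRing.scale /=; ring.
Unshelve. all: by end_near. Qed.

End second_derivative.

Arguments is_derive1_near_comp {R g x b P}.
Arguments derive2_comp {R f f1 g g1 x f2 g2}.

Section normalized_line.
Variables (R : realType) (a b c : R).

Let q (t : R) := t ^+ 2 + 2 * c * t + 1.
Let S (t : R) := Num.sqrt (q t).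
Let h (t : R) := (S t)^-1 * (t * b + a).
Let h1 (t : R) := b / S t - (t + c) * (t * b + a) / S t ^+ 3.

Let q0 : q 0 = 1. Proof. by rewrite /q expr0n /= mulr0 !add0r. Qed.
Let S0 : S 0 = 1. Proof. by rewrite /S q0 sqrtr1. Qed.

Let is_derive_q (t : R) : is_derive t 1 q (2 * t + 2 * c).
Proof.
have := is_deriveD (is_deriveD (is_deriveX 2 (is_derive_id t 1))
    (is_deriveM (is_derive_cst (2 * c) t 1) (is_derive_id t 1)))
  (is_derive_cst (1 : R) t 1).
by move=> /is_derive_eq; apply; rewrite /GRing.scale /=; ring.
Qed.

Let is_derive_S (t : R) : 0 < q t -> is_derive t 1 S ((t + c) / S t).
Proof.
move=> qt; have Sneq0 : S t != 0 by rewrite gt_eqF ?sqrtr_gt0.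
apply: is_derive_eq (is_derive1_comp (is_derive1_sqrt qt) (is_derive_q t)) _.
by rewrite -/(S t); field.
Qed.

Let is_derive_h (t : R) : 0 < q t -> is_derive t 1 h (h1 t).
Proof.
move=> qt; have Sneq0 : S t != 0 by rewrite gt_eqF ?sqrtr_gt0.
have := is_deriveM (is_deriveV Sneq0 (is_derive_S t qt))
  (is_deriveD (is_deriveM (is_derive_id t 1) (is_derive_cst b t 1))
    (is_derive_cst a t 1)).
by move=> /is_derive_eq; apply; rewrite /h1 /GRing.scale /= !fctE; field.
Qed.

Let is_derive_h1 : is_derive (0 : R) 1 h1 (3 * a * c ^+ 2 - a - 2 * b * c).
Proof.
have q0_gt0 : 0 < q 0 by rewrite q0.
have DS := is_derive_S 0 q0_gt0.
have S0neq0 : S 0 != 0 by rewrite S0 oner_eq0.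
have S03neq0 : S 0 ^+ 3 != 0 by rewrite S0 expr1n oner_eq0.
have := is_deriveB
  (is_deriveM (is_derive_cst b (0 : R) 1) (is_deriveV S0neq0 DS))
  (is_deriveM (is_deriveM
      (is_deriveD (is_derive_id (0 : R) 1) (is_derive_cst c (0 : R) 1))
      (is_deriveD (is_deriveM (is_derive_id (0 : R) 1) (is_derive_cst b (0 : R) 1))
         (is_derive_cst a (0 : R) 1)))
     (is_deriveV (f := S ^+ 3) S03neq0 (is_deriveX 3 DS))).
by move=> /is_derive_eq; apply; rewrite /GRing.scale /= !fctE S0; field.
Qed.

Lemma derive2_comp_normalized_line (phi phi1 : R -> R) (phi2 : R) :
  (\forall y \near a, is_derive (y : R) 1 phi (phi1 y)) -> is_derive a 1 phi1 phi2 ->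
  derive (fun s : R => derive (fun t : R =>
      phi ((Num.sqrt (t ^+ 2 + 2 * c * t + 1))^-1 * (t * b + a))) s 1) 0 1
    = phi2 * (b - c * a) ^+ 2 + phi1 a * (3 * a * c ^+ 2 - a - 2 * b * c).
Proof.
move=> Dphi Dphi1.
have h0 : h 0 = a by rewrite /h S0 invr1 mul1r mul0r add0r.
have h10 : h1 0 = b - c * a by rewrite /h1 S0 expr1n !divr1 mul0r !add0r.
have Dh : \forall t \near (0 : R), is_derive (t : R) 1 h (h1 t).
  have q_gt0 : \forall t \near (0 : R), 0 < q t.
    apply: (is_derive1_near_comp (P := fun r : R => 0 < r) (is_derive_q 0)).
    by rewrite q0; exact: lt_nbhsr ltr01.
  by apply: filterS q_gt0 => t; exact: is_derive_h.
rewrite -h0 in Dphi Dphi1.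
by rewrite (derive2_comp Dh is_derive_h1 Dphi Dphi1) h0 h10.
Qed.

End normalized_line.

Lemma sum_natr_eq_mul {R : pzSemiRingType} {N : nat} (i : 'I_N) (F : 'I_N -> R) :
  \sum_(j < N) (j == i)%:R * F j = F i.
Proof.
rewrite (bigD1 i) //= eqxx mul1r big1 ?addr0 // => j /negbTE ->.
by rewrite mul0r.
Qed.

Lemma sqnorm_shift (R : realType) (N : nat) (x : 'rV[R]_N) (i : 'I_N) (t : R) :
  sqnorm (t *: delta_mx 0 i + x) = t ^+ 2 + 2 * x 0 i * t + sqnorm x.
Proof.
have E j : (t *: delta_mx 0 i + x) 0 j ^+ 2
           = x 0 j ^+ 2 + (j == i)%:R * (t ^+ 2 + 2 * x 0 j * t).
  by rewrite !mxE eqxx /=; case: (j == i) => /=; ring.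
rewrite /sqnorm; under eq_bigr => j _ do rewrite E.
by rewrite big_split /= sum_natr_eq_mul addrC.
Qed.

Section sphere_laplacian.
Variables (R : realType) (n : nat).
Implicit Types (phi : R -> R) (x : 'rV[R]_n.+1).

Lemma xlast_normalize_shift x (i : 'I_n.+1) (t : R) : sqnorm x = 1 ->
  xlast ((Num.sqrt (sqnorm (t *: delta_mx 0 i + x)))^-1 *: (t *: delta_mx 0 i + x))
  = (Num.sqrt (t ^+ 2 + 2 * x 0 i * t + 1))^-1 * (t * (i == ord_max)%:R + xlast x).
Proof. by move=> x1; rewrite sqnorm_shift x1 /xlast !mxE eqxx eq_sym. Qed.

Lemma derive2_xlast_normalize_basis phi (phi1 : R -> R) (phi2 : R) x (i : 'I_n.+1) :
  sqnorm x = 1 ->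
  (\forall y \near xlast x, is_derive (y : R) 1 phi (phi1 y)) ->
  is_derive (xlast x) 1 phi1 phi2 ->
  derive (fun y => derive (fun z => phi (xlast ((Num.sqrt (sqnorm z))^-1 *: z)))
                          y (delta_mx 0 i)) x (delta_mx 0 i)
  = phi2 * ((i == ord_max)%:R - x 0 i * xlast x) ^+ 2
    + phi1 (xlast x) * (3 * xlast x * x 0 i ^+ 2 - xlast x
                        - 2 * (i == ord_max)%:R * x 0 i).
Proof.
move=> x1 Dphi Dphi1; rewrite derive2_along_line.
have -> : (fun t : R => phi (xlast ((Num.sqrt (sqnorm (t *: delta_mx 0 i + x)))^-1
                                     *: (t *: delta_mx 0 i + x))))
  = (fun t : R => phi ((Num.sqrt (t ^+ 2 + 2 * x 0 i * t + 1))^-1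
                       * (t * (i == ord_max)%:R + xlast x))).
  by apply/funext => t; rewrite xlast_normalize_shift.
exact: derive2_comp_normalized_line.
Qed.

Lemma sphere_lap_xlast_comp phi (phi1 : R -> R) (phi2 : R) x :
  sqnorm x = 1 ->
  (\forall y \near xlast x, is_derive (y : R) 1 phi (phi1 y)) ->
  is_derive (xlast x) 1 phi1 phi2 ->
  sphere_lap (fun y => phi (xlast y)) x
    = phi2 * (1 - xlast x ^+ 2) - n%:R * xlast x * phi1 (xlast x).
Proof.
move=> x1 Dphi Dphi1; rewrite /sphere_lap /eucl_lap.
under eq_bigr => i _ do rewrite derive2_xlast_normalize_basis //.
set a := xlast x.
have sum_c2 : \sum_(i < n.+1) x 0 i ^+ 2 = 1 := x1.
rewrite (eq_bigr (fun i : 'I_n.+1 =>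
    ((phi2 * a ^+ 2 + 3 * a * phi1 a) * x 0 i ^+ 2 - a * phi1 a)
    + (i == ord_max)%:R * (phi2 - 2 * (phi2 * a + phi1 a) * x 0 i))); last first.
  by move=> i _; case: (i == ord_max) => /=; ring.
rewrite big_split /= sum_natr_eq_mul big_split /= -mulr_sumr sum_c2.
rewrite sumr_const card_ord -mulr_natl -[x 0 ord_max]/a.
by ring.
Qed.

End sphere_laplacian.

Arguments sphere_lap_xlast_comp {R n phi phi1 phi2 x}.

Section flat_exponential.
Variables (R : realType) (d : R).

Lemma is_derive_expR_inv {y : R} : d < y ->
  is_derive y 1 (fun z => expR (- (z - d)^-1)) (expR (- (y - d)^-1) / (y - d) ^+ 2).
Proof.
move=> dy; have yd : y - d != 0 by rewrite subr_eq0 gt_eqF.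
have := is_derive1_comp (is_derive_expR _) (is_deriveN
  (is_deriveV (f := fun z => z - d) yd
     (is_deriveB (is_derive_id y 1) (is_derive_cst d y 1)))).
by move=> /is_derive_eq; apply; rewrite /GRing.scale /=; field.
Qed.

Lemma is_derive_expR_inv_div {y : R} : d < y ->
  is_derive y 1 (fun z => expR (- (z - d)^-1) / (z - d) ^+ 2)
    (expR (- (y - d)^-1) * (1 - 2 * (y - d)) / (y - d) ^+ 4).
Proof.
move=> dy; have yd : y - d != 0 by rewrite subr_eq0 gt_eqF.
have yd2 : (y - d) ^+ 2 != 0 by rewrite expf_neq0.
have := is_deriveM (is_derive_expR_inv dy)
  (is_deriveV (f := fun z => (z - d) ^+ 2) yd2
     (is_deriveX 2 (is_deriveB (is_derive_id y 1) (is_derive_cst d y 1)))).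
by move=> /is_derive_eq; apply; rewrite /GRing.scale /= !fctE; field.
Qed.

End flat_exponential.

Arguments is_derive_expR_inv {R d y}.
Arguments is_derive_expR_inv_div {R d y}.

Lemma laplacian_bracket_ge0 (R : realType) (N d a : R) :
  0 <= N -> 0 < d -> d < (10 * (N + 1))^-1 -> d < a -> a < 3 * d ->
  N * a * (a - d) ^+ 2 <= (1 - 2 * (a - d)) * (1 - a ^+ 2).
Proof.
move=> N0 d0 d_small da ad.
have {}d_small : 10 * (N * d) + 10 * d < 1.
  have pos : 0 < 10 * (N + 1) by rewrite mulr_gt0 // ltr_wpDl.
  rewrite (_ : _ + _ = d * (10 * (N + 1))); last by ring.
  by rewrite -ltr_pdivlMr // mul1r.
have Nd0 : 0 <= N * d by rewrite mulr_ge0 // ltW.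
have a_small : a < 3 / 10 by lra.
have a0 : 0 < a by lra.
have ds_ge : 1 / 2 <= 1 - 2 * (a - d) by lra.
have a2_ge : 1 / 2 <= 1 - a ^+ 2.
  have : a * a <= 3 / 10 * a by rewrite ler_pM2r // ltW.
  by rewrite expr2; lra.
have Na_le : N * a <= 3 / 10.
  have : N * a <= N * (3 * d) by rewrite ler_wpM2l // ltW.
  lra.
have s2_le : (a - d) ^+ 2 <= 1 / 5 * (1 / 5) by rewrite expr2; apply: ler_pM; lra.
have lhs_le : N * a * (a - d) ^+ 2 <= 3 / 10 * (1 / 5 * (1 / 5)).
  by apply: ler_pM => //; [rewrite mulr_ge0 // ltW | exact: sqr_ge0].
have rhs_ge : 1 / 2 * (1 / 2) <= (1 - 2 * (a - d)) * (1 - a ^+ 2).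
  by apply: ler_pM; lra.
lra.
Qed.

Theorem lemma4p1 (R : realType) (n : nat) :
  exists2 delta0 : R, 0 < delta0 &
    forall delta : R, 0 < delta -> delta < delta0 ->
    forall x : 'rV[R]_n.+1, sqnorm x = 1 ->
      delta < xlast x -> xlast x < 3 * delta ->
      0 <= sphere_lap (fun y => expR (- (xlast y - delta)^-1)) x.
Proof.
exists (10 * (n%:R + 1))^-1; first by rewrite invr_gt0 mulr_gt0 // ltr_wpDl.
move=> d d0 d_small x x1 dx xd.
have Dphi : \forall y \near xlast x,
    is_derive (y : R) 1 (fun z => expR (- (z - d)^-1)) (expR (- (y - d)^-1) / (y - d) ^+ 2).
  by apply: filterS (lt_nbhsr dx) => y; exact: is_derive_expR_inv.
rewrite (sphere_lap_xlast_comp x1 Dphi (is_derive_expR_inv_div dx)).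
set a := xlast x in dx xd *; set E := expR _.
have ad : a - d != 0 by rewrite subr_eq0 gt_eqF.
rewrite (_ : _ - _ = E / (a - d) ^+ 4 *
  ((1 - 2 * (a - d)) * (1 - a ^+ 2) - n%:R * a * (a - d) ^+ 2)); last by field.
by rewrite mulr_ge0 ?divr_ge0 ?expR_ge0 ?exprn_ge0 ?subr_ge0
  ?laplacian_bracket_ge0 // ltW.
Qed.
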